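(* Let $C,A^1,\dots,A^m\in\mathbb{S}^n$, $b\in\mathbb{R}^m$, with $\mathbf{P}$ and $\mathbf{D}$ feasible and $\mathbf{D}$ of singularity degree one, and let $0\le r<n$ be such that, writing $L(y)=C-\sum_iA^iy_i$ in blocks $L_{11}(y)\in\mathbb{S}^r$, $L_{12}(y)\in\mathbb{R}^{r\times(n-r)}$, $L_{22}(y)\in\mathbb{S}^{n-r}$: (a) for every $y$, $L(y)\succeq0$ iff $L_{12}(y)=0$, $L_{22}(y)=0$, $L_{11}(y)\succeq0$; (b) some $y$ has $L_{12}(y)=0$, $L_{22}(y)=0$, $L_{11}(y)\succ0$; (c) there is $X=\mathrm{diag}(0,X_{22})$ with $X_{22}\succ0$, $C\bullet X=0$, $A^i\bullet X=0$ for all $i$. Let $M>0$ be a constant such that for all $t\ge0$ and $y\in\mathbb{R}^m$, $L_{22}(y)+tI_{22}\succeq0$ implies $tMI_{22}\succeq L_{22}(y)+tI_{22}$. For $\alpha>0,t>0$ let $u_1(\alpha,t)$ be the optimal value (supremum) of $$\mathbf{RD1}(\alpha,t):\ \max_y\ b^Ty-\frac{\|L_{12}(y)\|_F^2}{M\alpha}\ \text{ s.t. } L(y)+t\alpha I\succeq0 .$$ Then for all $t>0$ and $\alpha>0$, $$v(0,t)\le v(t\alpha,t)\le u_1(\alpha,t)+t^2\alpha n+tc,\qquad c:=C\bullet I .$$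
   Context: $\mathbf{P}$: $\min_X C\bullet X$ s.t. $A^i\bullet X=b_i$, $X\succeq0$; $\mathbf{D}$: $\max_y b^Ty$ s.t. $C-\sum_iA^iy_i\succeq0$. $\mathbf{D}$ has singularity degree one if it is feasible and there exists a nonzero $X\succeq0$ with $C\bullet X=0$, $A^i\bullet X=0$ for all $i$, such that some $y$ has $C-\sum_iA^iy_i$ in the relative interior of $\{Z\succeq0: Z\bullet X=0\}$. For $\varepsilon,\eta\ge0$: $\mathbf{D}(\varepsilon,\eta)$: $\max_y \sum_i(b_i+\eta A^i\bullet I)y_i$ s.t. $C-\sum_iA^iy_i+\varepsilon I\succeq0$, and $\mathbf{P}(\varepsilon,\eta)$: $\min_X (C+\varepsilon I)\bullet X$ s.t. $A^i\bullet X=b_i+\eta A^i\bullet I$, $X\succeq0$; for $(\varepsilon,\eta)\ne(0,0)$, $v(\varepsilon,\eta)$ is their common optimal value. $\|\cdot\|_F$ is the Frobenius norm; $I_{22}$ is the $(n-r)\times(n-r)$ identity. *)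

From HB Require Import structures.
From mathcomp Require Import all_boot all_order all_algebra.
From mathcomp Require Import boolp classical_sets reals constructive_ereal ereal.

Set Implicit Arguments.
Unset Strict Implicit.
Unset Printing Implicit Defensive.

Import Order.TTheory GRing.Theory Num.Theory.
Local Open Scope classical_set_scope.
Local Open Scope ring_scope.

Section SDP.
Variable R : realType.

Definition mdot (p q : nat) (A B : 'M[R]_(p, q)) : R :=
  \sum_(i < p) \sum_(j < q) A i j * B i j.

Definition psd (n : nat) (A : 'M[R]_n) : Prop :=
  A^T = A /\ forall x : 'cV[R]_n, 0 <= (x^T *m A *m x) 0 0.

Definition pd (n : nat) (A : 'M[R]_n) : Prop :=
  A^T = A /\ forall x : 'cV[R]_n, x != 0 -> 0 < (x^T *m A *m x) 0 0.

Definition Lmap (n m : nat) (C : 'M[R]_n) (A : 'I_m -> 'M[R]_n) (y : 'I_m -> R)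
  : 'M[R]_n := C - \sum_(i < m) y i *: A i.

Definition bdot (m : nat) (b y : 'I_m -> R) : R := \sum_(i < m) b i * y i.

Definition P_feasible (n m : nat) (A : 'I_m -> 'M[R]_n) (b : 'I_m -> R) : Prop :=
  exists X : 'M[R]_n, psd X /\ forall i, mdot (A i) X = b i.

Definition D_feasible (n m : nat) (C : 'M[R]_n) (A : 'I_m -> 'M[R]_n) : Prop :=
  exists y : 'I_m -> R, psd (Lmap C A y).

Definition affine_hull (n : nat) (S : set 'M[R]_n) : set 'M[R]_n :=
  [set Z | exists (s : seq 'M[R]_n) (l : seq R),
     size l = size s /\ (forall j, (j < size s)%N -> S s`_j) /\
     \sum_(j < size s) l`_j = 1 /\ Z = \sum_(j < size s) l`_j *: s`_j].

Definition rel_interior (n : nat) (S : set 'M[R]_n) : set 'M[R]_n :=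
  [set Z | S Z /\ exists e : R, 0 < e /\
     forall W, affine_hull S W -> mdot (W - Z) (W - Z) < e ^+ 2 -> S W].

Definition sing_deg_one (n m : nat) (C : 'M[R]_n) (A : 'I_m -> 'M[R]_n) : Prop :=
  D_feasible C A /\
  exists X : 'M[R]_n, [/\ psd X, X != 0, mdot C X = 0,
    (forall i, mdot (A i) X = 0) &
    exists y, rel_interior [set Z | psd Z /\ mdot Z X = 0] (Lmap C A y)].

Definition vD (n m : nat) (C : 'M[R]_n) (A : 'I_m -> 'M[R]_n) (b : 'I_m -> R)
  (eps eta : R) : \bar R :=
  ereal_sup ((fun y => (\sum_(i < m) (b i + eta * mdot (A i) 1%:M) * y i)%:E) @`
     [set y | psd (Lmap C A y + eps%:M)]).

Definition u1 (r k m : nat) (C : 'M[R]_(r + k)) (A : 'I_m -> 'M[R]_(r + k))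
  (b : 'I_m -> R) (M alpha t : R) : \bar R :=
  ereal_sup ((fun y => (bdot b y -
       mdot (ursubmx (Lmap C A y)) (ursubmx (Lmap C A y)) / (M * alpha))%:E) @`
     [set y | psd (Lmap C A y + (t * alpha)%:M)]).

End SDP.

(* Enlarging the shift enlarges the feasible set of D(eps, t), which gives
   v(0, t) <= v(t alpha, t).  For y feasible in D(t alpha, t) the objective is
   b^T y + t (c - tr L(y)).  With Z = L(y) + t alpha I, the hypothesis on M
   gives Z22 <= t alpha M I, and a Schur-type test of Z bounds
   ||L12(y)||_F^2 <= t alpha M tr Z11 <= t alpha M tr Z = t alpha M (tr L(y) + t alpha n).
   Hence the objective is at most the RD1(alpha, t) objective at the same y plus
   t^2 alpha n + t c. *)

From HB Require Import structures.
From mathcomp Require Import all_boot all_order all_algebra.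
From mathcomp Require Import boolp classical_sets reals constructive_ereal ereal.
From mathcomp Require Import ring lra.
Import Order.TTheory GRing.Theory Num.Theory.
Local Open Scope ring_scope.

Set Implicit Arguments.
Unset Strict Implicit.
Unset Printing Implicit Defensive.

Section PsdFacts.
Variable R : realType.
Implicit Types (n r k : nat).

Local Notation bform u Z w := ((u^T *m Z *m w) 0 0).
Local Notation qform Z x := (bform x Z x).

Lemma mdotmx1 n (X : 'M[R]_n) : mdot X 1%:M = \tr X.
Proof.
apply: eq_bigr => i _; rewrite (bigD1 i) //= big1 ?addr0 => [|j ji].
  by rewrite mxE eqxx mulr1.
by rewrite mxE eq_sym (negbTE ji) mulr0.
Qed.

Lemma psdD_scalar n (X : 'M[R]_n) d : 0 <= d -> psd X -> psd (X + d%:M).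
Proof.
move=> d_ge0 [Xsym Xpsd]; split; first by rewrite linearD /= Xsym tr_scalar_mx.
move=> x; rewrite mulmxDr mulmxDl mul_mx_scalar -scalemxAl mxE.
apply: addr_ge0 => //; rewrite mxE; apply: mulr_ge0 => //; rewrite mxE.
by apply: sumr_ge0 => i _; rewrite mxE -expr2 sqr_ge0.
Qed.

Lemma psd_trace_ge0 n (X : 'M[R]_n) : psd X -> 0 <= \tr X.
Proof.
move=> [_ Xpsd]; apply: sumr_ge0 => i _.
by have := Xpsd (delta_mx i 0); rewrite trmx_delta -rowE -colE !mxE.
Qed.

Lemma qform_block_mx r k (Z11 : 'M[R]_r) Z12 Z21 (Z22 : 'M_k)
    (u : 'cV[R]_r) (w : 'cV_k) :
  qform (block_mx Z11 Z12 Z21 Z22) (col_mx u w) =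
  qform Z11 u + bform u Z12 w + bform w Z21 u + qform Z22 w.
Proof.
rewrite tr_col_mx mul_row_block mul_row_col !mulmxDl !mxE.
by rewrite addrACA !addrA.
Qed.

Lemma qform_sym_block_mx r k (Z11 : 'M[R]_r) Z12 (Z22 : 'M_k)
    (u : 'cV[R]_r) (w : 'cV_k) :
  qform (block_mx Z11 Z12 Z12^T Z22) (col_mx u w) =
  qform Z11 u + 2 * bform u Z12 w + qform Z22 w.
Proof.
rewrite qform_block_mx.
have -> : w^T *m Z12^T *m u = (u^T *m Z12 *m w)^T by rewrite !trmx_mul trmxK mulmxA.
by rewrite [_^T 0 0]mxE -addrA mulr2n mulrDl mul1r !addrA.
Qed.

Lemma psd_drsubmx r k (Z : 'M[R]_(r + k)) : psd Z -> psd (drsubmx Z).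
Proof.
move=> [Zsym Zpsd]; split; first by rewrite trmx_drsub Zsym.
move=> z; have := Zpsd (col_mx 0 z); rewrite -{1}(submxK Z) qform_block_mx.
by rewrite trmx0 !(mulmx0, mul0mx) !mxE !add0r.
Qed.

(* Test the block matrix on [col_mx (mu *: e_i) (- z)], [z] the transposed
   i-th row of [Z12]: with [qform Z22 z <= mu * |z|^2] this gives
   [|z|^2 <= mu * Z11 i i]. *)
Lemma psd_block_offdiag_bound r k (Z11 : 'M[R]_r) Z12 Z21 (Z22 : 'M_k) mu :
  0 < mu -> psd (block_mx Z11 Z12 Z21 Z22) -> psd (mu%:M - Z22) ->
  mdot Z12 Z12 <= mu * \tr Z11.
Proof.
move=> mu_gt0 [Zsym Zpsd] [_ Z22_le].
have Z21E : Z21 = Z12^T.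
  by move: Zsym; rewrite tr_block_mx => /eq_block_mx[_ _ <- _].
rewrite mulr_sumr; apply: ler_sum => i _.
set z := (row i Z12)^T.
have row_sqnormE : \sum_(j < k) Z12 i j * Z12 i j = (z^T *m z) 0 0.
  by rewrite /z trmxK mxE; apply: eq_bigr => j _; rewrite !mxE.
have := Z22_le z.
rewrite mulmxBr mulmxBl mul_mx_scalar -scalemxAl mxE.
have := Zpsd (col_mx (mu *: delta_mx i 0) (- z)).
rewrite Z21E qform_sym_block_mx.
rewrite !linearZ /= -!scalemxAl !mulmxN [(- z)^T]linearN /= !mulNmx opprK.
rewrite trmx_delta -!rowE -colE -[row i Z12]trmxK -/z row_sqnormE.
move: (z^T *m z) (z^T *m Z22 *m z) => S Q; rewrite !mxE => test_ge0 Z22_le_mu.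
have : 0 <= mu * (mu * Z11 i i - S 0 0) by lra.
by rewrite pmulr_rge0 // subr_ge0.
Qed.

Lemma addmx_scalar_block r k (L : 'M[R]_(r + k)) s : L + s%:M =
  block_mx (ulsubmx L + s%:M) (ursubmx L) (dlsubmx L) (drsubmx L + s%:M).
Proof. by rewrite -{1}(submxK L) (scalar_mx_block r k s) add_block_mx !addr0. Qed.

Lemma psd_drsubmx_shift r k (L : 'M[R]_(r + k)) s :
  psd (L + s%:M) -> psd (drsubmx L + s%:M).
Proof. by move/psd_drsubmx; rewrite addmx_scalar_block block_mxKdr. Qed.

Lemma psd_shift_ursubmx_bound r k (L : 'M[R]_(r + k)) s mu : 0 < mu ->
  psd (L + s%:M) -> psd (mu%:M - (drsubmx L + s%:M)) ->
  mdot (ursubmx L) (ursubmx L) <= mu * (\tr L + s * (r + k)%:R).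
Proof.
move=> mu_gt0 Lpsd Ldr_le.
have trLs : \tr L + s * (r + k)%:R =
    \tr (ulsubmx L + s%:M) + \tr (drsubmx L + s%:M).
  rewrite -(mxtrace_block _ (ursubmx L) (dlsubmx L)) -addmx_scalar_block.
  by rewrite mxtraceD mxtrace_scalar mulr_natr.
have tr_dr_ge0 := psd_trace_ge0 (psd_drsubmx_shift Lpsd).
rewrite addmx_scalar_block in Lpsd.
apply: (le_trans (psd_block_offdiag_bound mu_gt0 Lpsd Ldr_le)).
by rewrite trLs ler_pM2l // lerDl.
Qed.

Lemma perturbed_objectiveE n m (C : 'M[R]_n) (A : 'I_m -> 'M[R]_n) b y eta :
  \sum_(i < m) (b i + eta * mdot (A i) 1%:M) * y i =
  bdot b y + eta * (\tr C - \tr (Lmap C A y)).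
Proof.
rewrite /Lmap linearB /= opprB subrKC linear_sum /= mulr_sumr /bdot -big_split.
by apply: eq_bigr => i _; rewrite mdotmx1 mxtraceZ /=; ring.
Qed.

End PsdFacts.

Theorem lemma3 (R : realType) (r k m : nat) (hk : (0 < k)%N)
  (C : 'M[R]_(r + k)) (A : 'I_m -> 'M[R]_(r + k)) (b : 'I_m -> R)
  (hCsym : C^T = C) (hAsym : forall i, (A i)^T = A i)
  (hP : P_feasible A b) (hD : D_feasible C A) (hsd : sing_deg_one C A)
  (ha : forall y, psd (Lmap C A y) <->
          [/\ ursubmx (Lmap C A y) = 0, drsubmx (Lmap C A y) = 0
            & psd (ulsubmx (Lmap C A y))])
  (hb : exists y, [/\ ursubmx (Lmap C A y) = 0, drsubmx (Lmap C A y) = 0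
            & pd (ulsubmx (Lmap C A y))])
  (hc : exists X22 : 'M[R]_k, [/\ pd X22,
          mdot C (block_mx 0 0 0 X22) = 0
          & forall i, mdot (A i) (block_mx 0 0 0 X22) = 0])
  (M : R) (hM : 0 < M)
  (hMb : forall (t : R) (y : 'I_m -> R), 0 <= t ->
          psd (drsubmx (Lmap C A y) + t%:M) ->
          psd ((t * M)%:M - (drsubmx (Lmap C A y) + t%:M))) :
  forall t alpha : R, 0 < t -> 0 < alpha ->
    (vD C A b 0 t <= vD C A b (t * alpha) t)%E /\
    (vD C A b (t * alpha) t <=
       adde (u1 C A b M alpha t)
            (t ^+ 2 * alpha * (r + k)%:R + t * mdot C 1%:M)%:E)%E.
Proof.
move=> t alpha t_gt0 alpha_gt0.
have s_ge0 : 0 <= t * alpha by rewrite mulr_ge0 // ltW.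
split.
  apply: le_ereal_sup => _ [y /= Lpsd <-]; exists y => //=.
  by move: Lpsd; rewrite raddf0 addr0 => /(psdD_scalar s_ge0).
apply: ge_ereal_sup => _ [y /= Lpsd <-].
set L := Lmap C A y in Lpsd *.
have pen_le : mdot (ursubmx L) (ursubmx L) / (M * alpha) <=
    t * (\tr L + t * alpha * (r + k)%:R).
  rewrite ler_pdivrMr ?mulr_gt0 // mulrAC (mulrC M) mulrA.
  apply: psd_shift_ursubmx_bound Lpsd (hMb _ _ s_ge0 (psd_drsubmx_shift Lpsd)).
  by rewrite !mulr_gt0.
apply: le_trans (leeD2r _ (ereal_sup_ubound _)); last by exists y.
rewrite -EFinD lee_fin (perturbed_objectiveE C) mdotmx1.
by rewrite -/L; lra.
Qed.
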